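(* For $g\geq1$, the level-2 principal congruence subgroup $\Gamma_2(g)$ is the normal closure in $\mathrm{GL}(g,\mathbb{Z})$ of $F_1$.
   Context: $\Gamma_2(g)$ is the kernel of the reduction homomorphism $\mathrm{GL}(g,\mathbb{Z})\to\mathrm{GL}(g,\mathbb{Z}/2\mathbb{Z})$. $F_1=I_g-2\mathcal{E}_{1,1}$ is the diagonal matrix $\mathrm{diag}(-1,1,\dots,1)$, where $\mathcal{E}_{1,1}$ has $(1,1)$-entry $1$ and all other entries $0$. *)

From mathcomp Require Import all_boot all_order all_algebra.
Set Implicit Arguments. Unset Strict Implicit. Unset Printing Implicit Defensive.
Import GRing.Theory Num.Theory.
Local Open Scope ring_scope.

Definition GLZ (g : nat) (A : 'M[int]_g) : Prop := A \in unitmx.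

Definition red2 (g : nat) (A : 'M[int]_g) : 'M['Z_2]_g :=
  map_mx (fun z : int => z%:~R : 'Z_2) A.

Definition Gamma2 (g : nat) (A : 'M[int]_g) : Prop :=
  GLZ A /\ red2 A = 1%:M.

(* F_1 = I_g - 2 E_{1,1} = diag(-1,1,...,1) *)
Definition F1 (g : nat) : 'M[int]_g :=
  \matrix_(i, j) (if i == j then (if nat_of_ord i == 0%N then -1 else 1) else 0).

Inductive gen_subgroup (g : nat) (X : 'M[int]_g -> Prop) : 'M[int]_g -> Prop :=
  | gs_gen x : X x -> gen_subgroup X x
  | gs_one : gen_subgroup X 1%:M
  | gs_mul a b : gen_subgroup X a -> gen_subgroup X b -> gen_subgroup X (a *m b)
  | gs_inv a : gen_subgroup X a -> gen_subgroup X (invmx a).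

Definition normal_closure (g : nat) (x : 'M[int]_g) : 'M[int]_g -> Prop :=
  gen_subgroup (fun y => exists P, GLZ P /\ y = P *m x *m invmx P).

From mathcomp Require Import all_boot all_order all_algebra zify.
Import GRing.Theory Num.Theory.
Set Implicit Arguments. Unset Strict Implicit. Unset Printing Implicit Defensive.
Local Open Scope ring_scope.

(* The normal closure N of F_1 lies in Gamma_2, which is normal and contains
   F_1 because -1 = 1 mod 2.  Conversely N contains every sign change F_k (a
   conjugate of F_1 by a transposition) and every transvection E_ij(+-2).  An
   element of Gamma_2 is then reduced to the identity one index k at a time:
   row operations E_pq(+-2) run a Euclid-like descent on column k, which ends
   at +-e_k because the pivot is odd and the other entries are even; F_k fixes
   the sign, and column operations E_kj(+-2) clear row k against the pivot 1. *)

Section ElementaryMatrices.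

Variables (R : comNzRingType) (n : nat).
Implicit Types (A : 'M[R]_n) (i j : 'I_n).

Definition sign_mx i : 'M[R]_n := diag_mx (\row_k (if k == i then -1 else 1)).

Definition transvection i j (c : R) : 'M[R]_n := 1%:M + c *: delta_mx i j.

Lemma mul_sign_mx i A r s :
  (sign_mx i *m A) r s = if r == i then - A r s else A r s.
Proof. by rewrite mul_diag_mx !mxE; case: eqP; rewrite ?mulN1r ?mul1r. Qed.

Lemma mul_mx_sign i A r s :
  (A *m sign_mx i) r s = if s == i then - A r s else A r s.
Proof. by rewrite mul_mx_diag !mxE; case: eqP; rewrite ?mulrN1 ?mulr1. Qed.

Lemma sign_mxK i : sign_mx i *m sign_mx i = 1%:M.
Proof.
apply/matrixP => r s; rewrite mul_sign_mx !mxE.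
by case: (r == s); case: (r == i); rewrite /= ?opprK ?oppr0 ?mulr1n ?mulr0n.
Qed.

Lemma mul_delta_mxE i j A r s : (delta_mx i j *m A) r s = (r == i)%:R * A j s.
Proof.
rewrite !mxE (bigD1 j) //= big1 ?addr0 => [|l /negPf nlj]; rewrite mxE.
  by rewrite eqxx andbT.
by rewrite nlj andbF mul0r.
Qed.

Lemma mul_mx_deltaE i j A r s : (A *m delta_mx i j) r s = (s == j)%:R * A r i.
Proof.
rewrite !mxE (bigD1 i) //= big1 ?addr0 => [|l /negPf nli]; rewrite mxE.
  by rewrite eqxx mulrC.
by rewrite nli mulr0.
Qed.

Lemma mul_transvection i j c A r s :
  (transvection i j c *m A) r s = A r s + (r == i)%:R * c * A j s.
Proof. by rewrite mulmxDl mul1mx -scalemxAl 2!mxE mul_delta_mxE mulrCA mulrA. Qed.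

Lemma mul_mx_transvection i j c A r s :
  (A *m transvection i j c) r s = A r s + (s == j)%:R * c * A r i.
Proof. by rewrite mulmxDr mulmx1 -scalemxAr 2!mxE mul_mx_deltaE mulrCA mulrA. Qed.

Lemma transvectionD i j a b : i != j ->
  transvection i j a *m transvection i j b = transvection i j (a + b).
Proof.
move=> nij; rewrite mulmxDl !mulmxDr !mul1mx mulmx1 -scalemxAl -scalemxAr.
rewrite mul_delta_mx_0 1?eq_sym // !scaler0 addr0 /transvection scalerDl.
by rewrite [a *: _ + _]addrC addrA.
Qed.

Lemma transvectionK i j c : i != j ->
  transvection i j c *m transvection i j (- c) = 1%:M.
Proof. by move=> nij; rewrite transvectionD // subrr /transvection scale0r addr0. Qed.

Lemma sign_conj_delta i j : i != j ->
  sign_mx i *m delta_mx j i *m sign_mx i = - delta_mx j i.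
Proof.
move=> nij; apply/matrixP => r s; rewrite mul_mx_sign mul_sign_mx !mxE.
have [-> | nri] := eqVneq r i.
  by rewrite eq_sym (negPf nij) /=; case: ifP; rewrite !oppr0.
by case: (s == i); rewrite /= ?andbT ?andbF ?oppr0.
Qed.

Lemma sign_conj_transvection i j c : i != j ->
  sign_mx i *m transvection j i c *m sign_mx i = transvection j i (- c).
Proof.
move=> nij; rewrite /transvection mulmxDr mulmxDl mulmx1 sign_mxK.
by rewrite -scalemxAr -scalemxAl sign_conj_delta // scalerN scaleNr.
Qed.

Lemma tperm_mxK i j : tperm_mx i j *m tperm_mx i j = 1%:M :> 'M[R]_n.
Proof. by rewrite -perm_mxM perm.tperm2 perm_mx1. Qed.

Lemma tperm_conj_sign i j :
  tperm_mx i j *m sign_mx i *m tperm_mx i j = sign_mx j.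
Proof.
rewrite -xrowE -xcolE; apply/matrixP => r s.
rewrite /xcol /xrow /col_perm /row_perm !mxE (inj_eq perm.perm_inj).
case: (r == s) => //.
by rewrite (canF_eq (perm.tpermK _ _)) perm.tpermL.
Qed.

End ElementaryMatrices.

Arguments sign_mx {R n}.
Arguments transvection {R n}.
Arguments sign_mxK {R n}.
Arguments tperm_mxK {R n}.
Arguments tperm_conj_sign {R n}.

Lemma mulmx1_invmx (R : comUnitRingType) n (A B : 'M[R]_n) :
  A *m B = 1%:M -> invmx A = B.
Proof.
move=> AB1; have [uA _] := mulmx1_unit AB1.
by rewrite -[invmx A]mulmx1 -AB1 mulmxA mulVmx // mul1mx.
Qed.

Lemma invmxM (R : comUnitRingType) n (A B : 'M[R]_n) :
  A \in unitmx -> B \in unitmx -> invmx (A *m B) = invmx B *m invmx A.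
Proof.
move=> uA uB; apply: mulmx1_invmx.
by rewrite mulmxA -(mulmxA A) mulmxV // mulmx1 mulmxV.
Qed.

Lemma invmx_conj (R : comUnitRingType) n (P A : 'M[R]_n) : P \in unitmx ->
  invmx (P *m A *m invmx P) = P *m invmx A *m invmx P.
Proof.
move=> uP; have [uA | nuA] := boolP (A \in unitmx).
  apply: mulmx1_invmx.
  by rewrite !mulmxA mulmxKV // mulmxK // mulmxV.
have nuPAP : P *m A *m invmx P \in [predC unitmx].
  by rewrite inE !unitmx_mul unitmx_inv uP (negPf nuA).
by rewrite (invmx_out nuPAP) (invmx_out (x := A)) // inE.
Qed.

Section NormalClosure.

Variables (g : nat) (x : 'M[int]_g).
Local Notation N := (normal_closure x).

Lemma gen_subgroup_mulKl (X : 'M[int]_g -> Prop) B A : B \in unitmx ->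
  gen_subgroup X B -> gen_subgroup X (B *m A) -> gen_subgroup X A.
Proof. by move=> uB XB XBA; rewrite -(mulKmx uB A); apply: gs_mul; first exact: gs_inv. Qed.

Lemma gen_subgroup_mulKr (X : 'M[int]_g -> Prop) B A : B \in unitmx ->
  gen_subgroup X B -> gen_subgroup X (A *m B) -> gen_subgroup X A.
Proof. by move=> uB XB XAB; rewrite -(mulmxK uB A); apply: gs_mul => //; exact: gs_inv. Qed.

Lemma normal_closure_conj P A : GLZ P -> N A -> N (P *m A *m invmx P).
Proof.
move=> uP; elim=> [_ [Q [uQ ->]] | | a b _ Na _ Nb | a _ Na].
- apply: gs_gen; exists (P *m Q); split; first by rewrite /GLZ unitmx_mul uP uQ.
  by rewrite invmxM // !mulmxA.
- by rewrite mulmx1 mulmxV //; exact: gs_one.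
- have -> : P *m (a *m b) *m invmx P = P *m a *m invmx P *m (P *m b *m invmx P).
    by rewrite !mulmxA mulmxKV.
  exact: gs_mul.
- by rewrite -invmx_conj //; exact: gs_inv.
Qed.

Lemma normal_closure_self : N x.
Proof. by apply: gs_gen; exists 1%:M; rewrite /GLZ unitmx1 invmx1 mul1mx mulmx1. Qed.

End NormalClosure.

Lemma natr_Z2 (n : nat) : (n%:R : 'Z_2) = (odd n)%:R.
Proof. by apply: val_inj; rewrite /= !Zp_nat /= modn2; case: (odd n). Qed.

Lemma intr_Z2 (z : int) : (z%:~R : 'Z_2) = (odd `|z|)%:R.
Proof.
case: z => n; first exact: natr_Z2.
rewrite NegzE mulrNz; change (- (n.+1%:R : 'Z_2) = (odd n.+1)%:R).
by rewrite natr_Z2; case: (odd n.+1); apply/eqP.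
Qed.

Section Gamma2.

Variable g : nat.
Implicit Types A B P : 'M[int]_g.

Lemma red2M A B : red2 (A *m B) = red2 A *m red2 B.
Proof. exact: map_mxM. Qed.

Lemma red2_1 : red2 (1%:M : 'M[int]_g) = 1%:M.
Proof. exact: map_mx1. Qed.

Lemma Gamma2_mul A B : Gamma2 A -> Gamma2 B -> Gamma2 (A *m B).
Proof.
move=> [uA rA] [uB rB]; split; first by rewrite /GLZ unitmx_mul uA uB.
by rewrite red2M rA rB mulmx1.
Qed.

Lemma Gamma2_conj P A : GLZ P -> Gamma2 A -> Gamma2 (P *m A *m invmx P).
Proof.
move=> uP [uA rA]; split; first by rewrite /GLZ !unitmx_mul uP uA unitmx_inv.
by rewrite !red2M rA mulmx1 -red2M mulmxV // red2_1.
Qed.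

Lemma Gamma2_inv A : Gamma2 A -> Gamma2 (invmx A).
Proof.
move=> [uA rA]; split; first by rewrite /GLZ unitmx_inv.
by rewrite -[red2 _]mulmx1 -rA -red2M mulVmx // red2_1.
Qed.

Lemma Gamma2_sign_mx (i : 'I_g) : Gamma2 (sign_mx i).
Proof.
split; first exact: (mulmx1_unit (sign_mxK i)).1.
apply/matrixP => r s; rewrite !mxE; case: (r == s); case: (r == i) => //=.
by rewrite rmorphN1; apply/eqP.
Qed.

Lemma Gamma2_odd A r s : Gamma2 A -> odd `|A r s| = (r == s).
Proof.
move=> [_ /matrixP/(_ r s)]; rewrite !mxE intr_Z2.
by case: (odd _); case: (r == s) => // /eqP.
Qed.

End Gamma2.

Section Generators.

Variables (g : nat) (hg : (1 <= g)%N).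
Local Notation N := (normal_closure (F1 g)).

Lemma F1_sign_mx : F1 g = sign_mx (Ordinal hg).
Proof. by apply/matrixP => r s; rewrite !mxE; case: (r == s); rewrite ?mulr0n ?mulr1n. Qed.

Lemma normal_closure_sub_Gamma2 A : N A -> Gamma2 A.
Proof.
elim=> [_ [P [uP ->]] | | a b _ Ga _ Gb | a _ Ga].
- by apply: Gamma2_conj; rewrite // F1_sign_mx; exact: Gamma2_sign_mx.
- by split; [rewrite /GLZ unitmx1 | rewrite red2_1].
- exact: Gamma2_mul.
- exact: Gamma2_inv.
Qed.

Lemma normal_closure_mulKl B A : N B -> N (B *m A) -> N A.
Proof. by move=> NB; apply: (gen_subgroup_mulKl (normal_closure_sub_Gamma2 NB).1 NB). Qed.

Lemma normal_closure_mulKr B A : N B -> N (A *m B) -> N A.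
Proof. by move=> NB; apply: (gen_subgroup_mulKr (normal_closure_sub_Gamma2 NB).1 NB). Qed.

Lemma normal_closure_sign_mx k : N (sign_mx k).
Proof.
have uT : GLZ (tperm_mx (Ordinal hg) k) by exact: unitmx_perm.
have := normal_closure_conj uT (normal_closure_self (F1 g)).
by rewrite (mulmx1_invmx (tperm_mxK _ _)) F1_sign_mx tperm_conj_sign.
Qed.

(* E_ij(-2) = F_j * (E F_j E^-1) with E = E_ij(1), a product of two conjugates of F_1. *)
Lemma normal_closure_transvection i j c : i != j -> c = 2 \/ c = -2 ->
  N (transvection i j c).
Proof.
move=> nij hc; have nji : j != i by rewrite eq_sym.
have E1K : transvection i j 1 *m transvection i j (-1) = 1%:M :> 'M[int]_g.
  exact: transvectionK.
have uE1 : GLZ (transvection i j 1) by have [] := mulmx1_unit E1K.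
have Nm2 : N (transvection i j (-2)).
  have <- : sign_mx j *m (transvection i j 1 *m sign_mx j *m invmx (transvection i j 1))
            = transvection i j (-2) :> 'M[int]_g.
    by rewrite (mulmx1_invmx E1K) !mulmxA sign_conj_transvection // transvectionD.
  apply: gs_mul; first exact: normal_closure_sign_mx.
  exact: normal_closure_conj uE1 (normal_closure_sign_mx j).
case: hc => -> //.
have <- : invmx (transvection i j (-2)) = transvection i j 2 :> 'M[int]_g.
  by apply: mulmx1_invmx; rewrite -{2}(opprK 2) transvectionK.
exact: gs_inv.
Qed.

End Generators.

Lemma measure_descent (T : Type) (mu : T -> nat) (P Q : T -> Prop) :
  (forall x, P x -> Q x \/ exists y, [/\ P y, (mu y < mu x)%N & (Q y -> Q x)]) ->
  forall x, P x -> Q x.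
Proof.
move=> step x; elim: (mu x).+1 {-2}x (ltnSn (mu x)) => // m IH {}x lt_xm Px.
case: (step x Px) => [// | [y [Py lt_yx QyQx]]].
by apply/QyQx/IH; first exact: leq_trans lt_yx _.
Qed.

Lemma ltn_sum_at (I : finType) (f f' : I -> nat) p : (f' p < f p)%N ->
  (forall r, r != p -> f' r = f r) -> (\sum_r f' r < \sum_r f r)%N.
Proof.
move=> lt_p eq_f; rewrite (bigD1 p) //= [X in (_ < X)%N](bigD1 p) //=.
by rewrite (eq_bigr _ eq_f) ltn_add2r.
Qed.

Lemma absz_add_double_lt (x y : int) : (0 < `|y|)%N -> (`|y| < `|x|)%N ->
  exists2 c : int, c = 2 \/ c = -2 & (`|(x + c * y)%R| < `|x|)%N.
Proof.
move=> y_gt0 lt_yx.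
have [hx | hx] := lerP 0 x; have [hy | hy] := lerP 0 y.
- by exists (-2); [right | lia].
- by exists 2; [left | lia].
- by exists 2; [left | lia].
- by exists (-2); [right | lia].
Qed.

Lemma unitmx_pivot (R : comUnitRingType) n (A : 'M[R]_n) k :
  (forall i, i != k -> A i k = 0) -> A \in unitmx -> A k k \is a GRing.unit.
Proof.
move=> col0; rewrite unitmxE (expand_det_col A k) (bigD1 k) //= big1 ?addr0.
  by rewrite unitrM => /andP[].
by move=> i /col0 ->; rewrite mul0r.
Qed.

Definition id_upto (R : pzRingType) n k (A : 'M[R]_n) :=
  forall r s : 'I_n, (r < k)%N || (s < k)%N -> A r s = (r == s)%:R.

Lemma id_upto_eq1 (R : pzRingType) n (A : 'M[R]_n) : id_upto n A -> A = 1%:M.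
Proof. by move=> idA; apply/matrixP => r s; rewrite idA ?mxE ?ltn_ord. Qed.

Lemma id_upto_transvection (R : comNzRingType) n k (A : 'M[R]_n) (p q : 'I_n) c :
  ~~ (p < k)%N -> ~~ (q < k)%N -> id_upto k A -> id_upto k (transvection p q c *m A).
Proof.
move=> hp hq idA r s rs_lt; rewrite mul_transvection idA //.
have [erp | _] := eqVneq r p; last by rewrite !mul0r addr0.
have s_lt : (s < k)%N by move: rs_lt; rewrite erp (negPf hp).
rewrite (idA q s) ?s_lt ?orbT // (_ : q == s = false) ?mulr0 ?addr0 //.
by apply: contraNF hq => /eqP ->.
Qed.

Lemma id_upto_mx_transvection (R : comNzRingType) n k (A : 'M[R]_n) (p q : 'I_n) c :
  ~~ (p < k)%N -> ~~ (q < k)%N -> id_upto k A -> id_upto k (A *m transvection p q c).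
Proof.
move=> hp hq idA r s rs_lt; rewrite mul_mx_transvection idA //.
have [esq | _] := eqVneq s q; last by rewrite !mul0r addr0.
have r_lt : (r < k)%N by move: rs_lt; rewrite esq (negPf hq) orbF.
rewrite (idA r p) ?r_lt // (_ : r == p = false) ?mulr0 ?addr0 //.
by apply: contraNF hp => /eqP <-.
Qed.

Lemma id_uptoS (R : pzRingType) n k (A : 'M[R]_n) (hk : (k < n)%N) :
  id_upto k A -> (forall i, A i (Ordinal hk) = (i == Ordinal hk)%:R) ->
  (forall j, A (Ordinal hk) j = (Ordinal hk == j)%:R) -> id_upto k.+1 A.
Proof.
move=> idA col row r s /orP[]; rewrite ltnS leq_eqVlt => /orP[/eqP rk | rk].
- by rewrite (_ : r = Ordinal hk) ?row //; apply: val_inj.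
- by rewrite idA ?rk.
- by rewrite (_ : s = Ordinal hk) ?col //; apply: val_inj.
- by rewrite idA ?rk ?orbT.
Qed.

Lemma id_upto_sign_mx (R : comNzRingType) n k (A : 'M[R]_n) (p : 'I_n) :
  ~~ (p < k)%N -> id_upto k A -> id_upto k (sign_mx p *m A).
Proof.
move=> hp idA r s rs_lt; rewrite mul_sign_mx idA //.
have [erp | //] := eqVneq r p.
have s_lt : (s < k)%N by move: rs_lt; rewrite erp (negPf hp).
rewrite (_ : r == s = false) ?oppr0 //.
by apply: contraNF hp => /eqP ers; rewrite -erp ers.
Qed.

Section ColumnReduction.

Variables (g k : nat) (hg : (1 <= g)%N) (hk : (k < g)%N).
Local Notation N := (normal_closure (F1 g)).
Local Notation kk := (Ordinal hk).
Implicit Types A B : 'M[int]_g.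

Hypothesis IHk : forall A, Gamma2 A -> id_upto k.+1 A -> N A.

Let kk_ge : ~~ (kk < k)%N := negbT (ltnn k).

Lemma normal_closure_unit_col A : Gamma2 A -> id_upto k A ->
  (forall i, A i kk = (i == kk)%:R) -> N A.
Proof.
move=> GA idA colA.
pose P B := [/\ Gamma2 B, id_upto k B & forall i, B i kk = (i == kk)%:R].
apply: (@measure_descent _ (fun B => \sum_j `|B kk j|)%N P N _ A (And3 GA idA colA)).
move=> {GA idA colA}A [GA idA colA].
case: (pickP (fun j => (j != kk) && (A kk j != 0))) => [j /andP[njk nz] | row0]; last first.
  left; apply: IHk => //; apply: (id_uptoS idA colA) => j.
  have [-> | njk] := eqVneq j kk; first by rewrite colA eqxx.
  by move: (row0 j); rewrite /= njk => /negbFE/eqP.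
right; have nkj : kk != j by rewrite eq_sym.
have jk : ~~ (j < k)%N.
  by apply: contra nz => jk; rewrite idA ?jk ?orbT // (negPf nkj).
have odd_x : odd `|A kk j| = false by rewrite Gamma2_odd // (negPf nkj).
have [c hc lt_c] : exists2 c : int, c = 2 \/ c = -2 & (`|(A kk j + c * 1)%R| < `|A kk j|)%N.
  by apply: absz_add_double_lt => //; move: nz; rewrite -absz_eq0; lia.
have NE := normal_closure_transvection hg nkj hc.
exists (A *m transvection kk j c); split.
- split; first exact: Gamma2_mul GA (normal_closure_sub_Gamma2 hg NE).
    exact: id_upto_mx_transvection kk_ge jk idA.
  by move=> i; rewrite mul_mx_transvection (negPf nkj) !mul0r addr0 colA.
- apply: (ltn_sum_at (p := j)); first by rewrite mul_mx_transvection eqxx colA eqxx mul1r.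
  by move=> r /negPf nrj; rewrite mul_mx_transvection nrj !mul0r addr0.
- by move=> NAE; exact: (normal_closure_mulKr hg NE NAE).
Qed.

Lemma normal_closure_sparse_col A : Gamma2 A -> id_upto k A ->
  (forall i, i != kk -> A i kk = 0) -> N A.
Proof.
move=> GA idA col0.
have [pivot1 | pivotN1] : A kk kk = 1 \/ A kk kk = -1.
  by move: (A kk kk) (unitmx_pivot col0 GA.1) => x u; lia.
- apply: normal_closure_unit_col => // i.
  by have [-> | nik] := eqVneq i kk; [rewrite pivot1 | rewrite col0].
- have NF := normal_closure_sign_mx hg kk.
  apply: (normal_closure_mulKl hg NF); apply: normal_closure_unit_col.
  + exact: Gamma2_mul (normal_closure_sub_Gamma2 hg NF) GA.
  + exact: id_upto_sign_mx kk_ge idA.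
  + move=> i; rewrite mul_sign_mx.
    by have [-> | nik] := eqVneq i kk; [rewrite pivotN1 opprK | rewrite col0].
Qed.

Lemma col_transvection_descent (p q : 'I_g) c A : p != q -> ~~ (p < k)%N -> ~~ (q < k)%N ->
  c = 2 \/ c = -2 -> Gamma2 A -> id_upto k A ->
  (`|(A p kk + c * A q kk)%R| < `|A p kk|)%N ->
  exists B, [/\ Gamma2 B /\ id_upto k B,
    (\sum_i `|B i kk| < \sum_i `|A i kk|)%N & N B -> N A].
Proof.
move=> npq hp hq hc GA idA lt_c; have NE := normal_closure_transvection hg npq hc.
exists (transvection p q c *m A); split.
- split; first exact: Gamma2_mul (normal_closure_sub_Gamma2 hg NE) GA.
  exact: id_upto_transvection.
- apply: (ltn_sum_at (p := p)); first by rewrite mul_transvection eqxx mul1r.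
  by move=> r /negPf nrp; rewrite mul_transvection nrp !mul0r addr0.
- by move=> NEA; exact: (normal_closure_mulKl hg NE NEA).
Qed.

Lemma normal_closure_id_upto A : Gamma2 A -> id_upto k A -> N A.
Proof.
move=> GA idA; pose P B := Gamma2 B /\ id_upto k B.
apply: (@measure_descent _ (fun B => \sum_i `|B i kk|)%N P N _ A (conj GA idA)).
move=> {GA idA}A [GA idA].
case: (pickP (fun i => (i != kk) && (A i kk != 0))) => [i /andP[nik nz] | col0]; last first.
  left; apply: normal_closure_sparse_col => // i nik.
  by move: (col0 i); rewrite /= nik => /negbFE/eqP.
right; have ik : ~~ (i < k)%N.
  by apply: contra nz => ik; rewrite idA ?ik // (negPf nik).
have odd_x : odd `|A i kk| = false by rewrite Gamma2_odd // (negPf nik).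
have odd_y : odd `|A kk kk| = true by rewrite Gamma2_odd // eqxx.
(* Parity: the pivot is odd and A i kk is even, so they never have equal size. *)
have [lt_yx | lt_xy] : (`|A kk kk| < `|A i kk|)%N \/ (`|A i kk| < `|A kk kk|)%N by lia.
- have [|c hc lt_c] := @absz_add_double_lt (A i kk) (A kk kk) _ lt_yx; first lia.
  exact: col_transvection_descent nik ik kk_ge hc GA idA lt_c.
- have [|c hc lt_c] := @absz_add_double_lt (A kk kk) (A i kk) _ lt_xy; first lia.
  by apply: col_transvection_descent kk_ge ik hc GA idA lt_c; rewrite eq_sym.
Qed.

End ColumnReduction.

Lemma Gamma2_sub_normal_closure g (hg : (1 <= g)%N) A :
  Gamma2 A -> normal_closure (F1 g) A.
Proof.
move=> GA; suff Nid n : forall B, Gamma2 B -> id_upto (g - n) B -> normal_closure (F1 g) B.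
  by apply: (Nid g) => // r s; rewrite subnn !ltn0.
elim: n => [|n IHn] B GB idB.
  by rewrite subn0 in idB; rewrite (id_upto_eq1 idB); exact: gs_one.
have [lt_ng | le_gn] := ltnP n g; last first.
  by apply: IHn => //; have -> : (g - n = g - n.+1)%N by lia.
have hk : (g - n.+1 < g)%N by lia.
apply: (normal_closure_id_upto hg hk) => // C GC.
have -> : ((g - n.+1).+1 = g - n)%N by lia.
exact: IHn.
Qed.

Unset Implicit Arguments.

Theorem lemma3p4 (g : nat) (hg : (1 <= g)%N) (A : 'M[int]_g) :
  Gamma2 A <-> normal_closure (F1 g) A.
Proof.
split; [exact: Gamma2_sub_normal_closure | exact: normal_closure_sub_Gamma2].
Qed.
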